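(* Let $S$ be a simple $(l,r)$-framed algebra, and let $C_S=\{\alpha\in\mathbb{Z}_2^{l+r}:S_{(0,\alpha)}\ne0\}$, $D_S=\{d\in\mathbb{Z}_2^{l+r}:\bigoplus_c S_{(d,c)}\neq 0\}$. Then (1) $C_S$ and $D_S$ are subgroups of $\mathbb{Z}_2^{l+r}$; (2) $|\alpha|\in2\mathbb{Z}$ and $|d|\in 8\mathbb{Z}$ for all $\alpha\in C_S$, $d\in D_S$; (3) $|\alpha d|\in2\mathbb{Z}$ for all $\alpha\in C_S$, $d\in D_S$.
   Context: Let $\mathrm{IS}=\{0,\frac12,\frac1{16}\}$ with fusion rule $\star$ (values are subsets): $0\star h=h\star0=\{h\}$, $\frac12\star\frac12=\{0\}$, $\frac12\star\frac1{16}=\frac1{16}\star\frac12=\{\frac1{16}\}$, $\frac1{16}\star\frac1{16}=\{0,\frac12\}$; $A(h_0,h_1,h_2,h_3)=\{h: h\in h_2\star h_3,\ h_0\in h_1\star h\}$. For $h\in A(h_0,h_1,h_2,h_3)$, $h'\in A(h_0,h_2,h_1,h_3)$ define $B^{h,h'}_{h_0,h_1,h_2,h_3}$: $B_{*,0,*,*}=B_{*,*,0,*}=1$; $B_{*,\frac12,\frac12,*}=-1$; $B_{a,\frac12,\frac1{16},a'}=B_{a,\frac1{16},\frac12,a'}=i$ if $a$ or $a'$ is $\frac12$, else $-i$; $B^{b,b'}_{a,\frac1{16},\frac1{16},a'}=e^{-\pi i/8}\cdot\{1$ if $a,a'\ne\frac1{16},a=a'$; $i$ if $a,a'\neq\frac1{16},a\ne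 a'$; $\frac{1+i}2$ if $a=a'=\frac1{16},b=b'$; $\frac{1-i}2$ if $a=a'=\frac1{16},b\neq b'\}$. $\mathrm{IS}^{(l,r)}=\mathrm{IS}^l\times\mathrm{IS}^r$, $\lambda=(h_1,..,h_l,\bar h_1,..,\bar h_r)$, $s(\lambda)=\sum h_i-\sum\bar h_j$; $\star$, $A$ componentwise; $B^{\lambda,\lambda'}_{\lambda^0,\dots,\lambda^3}=\prod_{i\le l}B^{h_i,h'_i}_{h^0_i,\dots,h^3_i}\prod_{j\le r}\overline{B^{\bar h_j,\bar h'_j}_{\bar h^0_j,\dots,\bar h^3_j}}$. An $(l,r)$-framed algebra: finite-dimensional $\mathrm{IS}^{(l,r)}$-graded $S=\bigoplus S_\lambda$ over $\mathbb{C}$ with bilinear product, nonzero $1\in S_0$, $a\cdot_\lambda b$ the $S_\lambda$-component of $a\cdot b$, satisfying (FA1) $S_\lambda=0$ unless $s(\lambda)\in\mathbb{Z}$; (FA2) $S_0=\mathbb{C}1$, $1$ a two-sided unit; (FA3) $S_{\lambda^1}\cdot S_{\lambda^2}\subset\bigoplus_{\lambda\in\lambda^1\star\lambda^2}S_\lambda$; (FA4) $a_2\cdot_{\lambda^0}(a_1\cdot_{\lambda'}a_3)=\sum_{\lambda\in A(\lambda^0,\lambda^1,\lambda^2,\lambda^3)}B^{\lambda,\lambda'}_{\lambda^0,\lambda^1,\lambda^2,\lambda^3}a_1\cdot_{\lambda^0}(a_2\cdot_\lambda a_3)$ for $a_i\in S_{\lambda^i}$, $\lambda'\in A(\lambda^0,\lambda^2,\lambda^1,\lambda^3)$.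 Ideal: graded subspace $M$ with $S\cdot M\subset M$; simple: only ideals $0$ and $S$. Identify $\mathrm{IS}$ with $\{(d,c)\in\mathbb{Z}_2^2:dc=0\}$ via $0\leftrightarrow(0,0)$, $\frac12\leftrightarrow(0,1)$, $\frac1{16}\leftrightarrow(1,0)$, and componentwise $\mathrm{IS}^{(l,r)}$ with pairs $(d,c)\in(\mathbb{Z}_2^{l+r})^2$ with $dc=0$ (componentwise product); $S_{(d,c)}$ is the corresponding graded piece. For $c\in\mathbb{Z}_2^{l+r}$, $|c|_l$, $|c|_r$ count ones in the first $l$, last $r$ coordinates, and $|c|=|c|_l-|c|_r$. *)

From HB Require Import structures.
From mathcomp Require Import all_boot all_order all_algebra.
From mathcomp Require Import complex.
From mathcomp Require Import reals.

Set Implicit Arguments.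
Unset Strict Implicit.
Unset Printing Implicit Defensive.
Import Order.TTheory GRing.Theory Num.Theory.
Local Open Scope ring_scope.

Inductive IS := IS0 | IShalf | ISsixteenth.

Definition IS_to_ord (h : IS) : 'I_3 :=
  match h with IS0 => inord 0 | IShalf => inord 1 | ISsixteenth => inord 2 end.
Definition ord_to_IS (i : 'I_3) : IS :=
  match val i with 0 => IS0 | 1 => IShalf | _ => ISsixteenth end.
Lemma IS_ordK : cancel IS_to_ord ord_to_IS.
Proof. by case; rewrite /ord_to_IS /= inordK. Qed.

HB.instance Definition _ := Equality.copy IS (can_type IS_ordK).
HB.instance Definition _ := Choice.copy IS (can_type IS_ordK).
HB.instance Definition _ := Countable.copy IS (can_type IS_ordK).
HB.instance Definition _ := Finite.copy IS (can_type IS_ordK).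

Definition ISval (h : IS) : rat :=
  match h with IS0 => 0 | IShalf => 1 / 2 | ISsixteenth => 1 / 16 end.

(* fusion rule: fus h1 h2 h  <=>  h \in h1 * h2 *)
Definition fus (h1 h2 h : IS) : bool :=
  match h1, h2 with
  | IS0, _ => h == h2
  | _, IS0 => h == h1
  | IShalf, IShalf => h == IS0
  | IShalf, ISsixteenth | ISsixteenth, IShalf => h == ISsixteenth
  | ISsixteenth, ISsixteenth => (h == IS0) || (h == IShalf)
  end.

Section Bcoef.
Variable R : realType.
Local Open Scope complex_scope.

Definition Ci : R[i] := Complex 0 1.
(* e^{-pi i/8} = cos(pi/8) - i sin(pi/8),
   cos(pi/8) = sqrt(2+sqrt 2)/2, sin(pi/8) = sqrt(2-sqrt 2)/2 *)
Definition zeta_m8 : R[i] :=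
  Complex (Num.sqrt (2 + Num.sqrt 2) / 2) (- (Num.sqrt (2 - Num.sqrt 2) / 2)).

Definition Bcoef (h0 h1 h2 h3 h h' : IS) : R[i] :=
  match h1, h2 with
  | IS0, _ | _, IS0 => 1
  | IShalf, IShalf => -1
  | IShalf, ISsixteenth | ISsixteenth, IShalf =>
      if (h0 == IShalf) || (h3 == IShalf) then Ci else - Ci
  | ISsixteenth, ISsixteenth =>
      zeta_m8 *
      (if (h0 != ISsixteenth) && (h3 != ISsixteenth) then
         (if h0 == h3 then 1 else Ci)
       else if (h0 == ISsixteenth) && (h3 == ISsixteenth) then
         (if h == h' then (1 + Ci) / 2 else (1 - Ci) / 2)
       else 0 (* never used: A is empty in this case *))
  end.
End Bcoef.

(* ---------- IS^(l,r): coordinates 0..l-1 are left, l..l+r-1 right ---------- *)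
Definition Lam (l r : nat) := {ffun 'I_(l + r) -> IS}.

Definition is_left (l r : nat) (i : 'I_(l + r)) : bool := (i < l)%N.

Definition lam0 (l r : nat) : Lam l r := [ffun _ => IS0].

Definition sLam (l r : nat) (lam : Lam l r) : rat :=
  \sum_(i < l + r | is_left i) ISval (lam i)
  - \sum_(i < l + r | ~~ is_left i) ISval (lam i).

Definition fusL (l r : nat) (lam1 lam2 lam : Lam l r) : bool :=
  [forall i, fus (lam1 i) (lam2 i) (lam i)].

Definition inA (l r : nat) (l0 l1 l2 l3 lam : Lam l r) : bool :=
  fusL l2 l3 lam && fusL l1 lam l0.

Definition BL (R : realType) (l r : nat) (l0 l1 l2 l3 lam lam' : Lam l r) : R[i] :=
  \prod_(i < l + r)
    (if is_left i then Bcoef R (l0 i) (l1 i) (l2 i) (l3 i) (lam i) (lam' i)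
     else conjc (Bcoef R (l0 i) (l1 i) (l2 i) (l3 i) (lam i) (lam' i))).

(* ---------- (l,r)-framed algebras ----------
   S is a finite-dimensional vector space V over C = R[i], with an internal
   direct-sum decomposition V = (+)_lam S_lam given by a family of projections
   pi lam ('End(V)) with S_lam = image of pi lam; a bilinear product mul;
   a ._lam b = pi lam (mul a b). *)
Section Framed.
Variables (R : realType) (l r : nat) (V : vectType R[i]).
Variables (pi : Lam l r -> 'End(V)) (mul : V -> V -> V) (one : V).

Definition Sg (lam : Lam l r) : {vspace V} := limg (pi lam).

Definition graded_decomposition : Prop :=
  [/\ forall lam v, pi lam (pi lam v) = pi lam v,
      forall lam mu v, lam != mu -> pi lam (pi mu v) = 0
    & forall v, \sum_(lam : Lam l r) pi lam v = v].

Definition bilinear_mul : Prop :=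
  (forall (k : R[i]) x y z, mul (k *: x + y) z = k *: mul x z + mul y z) /\
  (forall (k : R[i]) x y z, mul x (k *: y + z) = k *: mul x y + mul x z).

Definition framed_algebra : Prop :=
  [/\ [/\ graded_decomposition, bilinear_mul,
          one != 0 & one \in Sg (lam0 l r)],
      forall lam, sLam lam \isn't a Num.int -> Sg lam = 0%VS,
      [/\ forall v, v \in Sg (lam0 l r) -> exists k : R[i], v = k *: one,
          forall a, mul one a = a
        & forall a, mul a one = a],
      forall l1 l2 a1 a2 lam, a1 \in Sg l1 -> a2 \in Sg l2 ->
        ~~ fusL l1 l2 lam -> pi lam (mul a1 a2) = 0
    &
      forall l0 l1 l2 l3 lam' a1 a2 a3,
        a1 \in Sg l1 -> a2 \in Sg l2 -> a3 \in Sg l3 -> inA l0 l2 l1 l3 lam' ->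
        pi l0 (mul a2 (pi lam' (mul a1 a3))) =
        \sum_(lam : Lam l r | inA l0 l1 l2 l3 lam)
           BL R l0 l1 l2 l3 lam lam' *: pi l0 (mul a1 (pi lam (mul a2 a3)))].

(* graded subspace: M = (+)_lam (M cap S_lam), i.e. stable under the projections *)
Definition graded_subspace (M : {vspace V}) : Prop :=
  forall lam v, v \in M -> pi lam v \in M.

Definition is_ideal (M : {vspace V}) : Prop :=
  graded_subspace M /\ forall a m, m \in M -> mul a m \in M.

Definition simple_framed : Prop :=
  forall M, is_ideal M -> M = 0%VS \/ M = fullv.

(* ---------- Z_2-labels: lam <-> (d, c) with dc = 0 ---------- *)
Definition lam_of_dc (d c : 'rV['F_2]_(l + r)) : Lam l r :=
  [ffun i => if d 0 i == 1 then ISsixteenth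
             else if c 0 i == 1 then IShalf else IS0].

Definition dc_ok (d c : 'rV['F_2]_(l + r)) : bool :=
  [forall i, d 0 i * c 0 i == 0].

Definition C_S : {set 'rV['F_2]_(l + r)} :=
  [set a | Sg (lam_of_dc 0 a) != 0%VS].

Definition D_S : {set 'rV['F_2]_(l + r)} :=
  [set d | [exists c, dc_ok d c && (Sg (lam_of_dc d c) != 0%VS)]].
End Framed.

Definition wtl (l r : nat) (c : 'rV['F_2]_(l + r)) : nat :=
  #|[set i : 'I_(l + r) | is_left i && (c 0 i == 1)]|.
Definition wtr (l r : nat) (c : 'rV['F_2]_(l + r)) : nat :=
  #|[set i : 'I_(l + r) | ~~ is_left i && (c 0 i == 1)]|.
Definition wt (l r : nat) (c : 'rV['F_2]_(l + r)) : int :=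
  (wtl c)%:Z - (wtr c)%:Z.

Definition cwmul (n : nat) (a b : 'rV['F_2]_n) : 'rV['F_2]_n :=
  \row_i (a 0 i * b 0 i).

Definition is_subgroup (n : nat) (G : {set 'rV['F_2]_n}) : Prop :=
  0 \in G /\ {in G &, forall x y, x - y \in G}.

From Pilot Require Import Defs.
From HB Require Import structures.
From mathcomp Require Import all_boot all_order all_algebra.
From mathcomp Require Import complex reals.
Import Order.TTheory GRing.Theory Num.Theory.
Local Open Scope ring_scope.
Set Implicit Arguments.
Unset Strict Implicit.

(* The support {lam | S_lam <> 0} of a simple framed algebra is closed under
   fusion: for nonzero homogeneous a and b, (FA3) and (FA4) make the
   annihilator of a a graded ideal; it misses 1, so it is 0, hence a.b <> 0
   and by (FA3) some component of a.b with label in lam1 * lam2 is nonzero.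
   On labels (d, c), fusion subtracts the d's (and the c's when d = 0), which
   gives the two subgroups.  For the weights, (FA1) says 16 s(lam) is in 16Z
   on the support.  Coordinatewise 16 h is 0, 8, 1 for h = 0, 1/2, 1/16, so
   16 s(0, a) = 8 |a|, 16 s(d, c) = |d| mod 8, and for lam in (0, a) * (d, c)
   we get 16 s(lam) - 16 s(d, c) + 16 s(0, a) = 8 |a d| mod 16. *)

Lemma F2P (x : 'F_2) : x = 0 \/ x = 1.
Proof. by case: x => [[|[|//]] ?]; [left|right]; apply: val_inj. Qed.

Definition eqIS (a b : IS) : bool :=
  match a, b with
  | IS0, IS0 | IShalf, IShalf | ISsixteenth, ISsixteenth => true
  | _, _ => false
  end.

Lemma IS_eqE a b : (a == b) = eqIS a b.
Proof. by case: a; case: b => //=; rewrite ?eqxx //; apply/negbTE/eqP. Qed.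

Definition IS_of_F2 (d c : 'F_2) : IS :=
  if d == 1 then ISsixteenth else if c == 1 then IShalf else IS0.

Definition half_bit (h : IS) : 'F_2 := (h == IShalf)%:R.

Definition int_of_F2 (x : 'F_2) : int := (x == 1)%:Z.

Definition wt16 (h : IS) : int :=
  match h with IS0 => 0 | IShalf => 8 | ISsixteenth => 1 end.

Lemma ISval_wt16 h : 16 * ISval h = (wt16 h)%:~R.
Proof. by case: h; apply/eqP. Qed.

Ltac F2_IS_cases :=
  repeat match goal with x : 'F_2 |- _ => have [->|->] := F2P x; clear x end;
  rewrite /fus /IS_of_F2 /half_bit /int_of_F2 /= ?IS_eqE /= ?subrr ?mulr0 ?mul0r.

Lemma fus_IS_of_F2_0 (x y : 'F_2) h :
  fus (IS_of_F2 0 x) (IS_of_F2 0 y) h -> h = IS_of_F2 0 (x - y).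
Proof. by case: h; F2_IS_cases. Qed.

Lemma fus_IS_of_F2 (d1 c1 d2 c2 : 'F_2) h :
  fus (IS_of_F2 d1 c1) (IS_of_F2 d2 c2) h ->
  h = IS_of_F2 (d1 - d2) (half_bit h) /\ (d1 - d2) * half_bit h = 0.
Proof. by case: h; F2_IS_cases. Qed.

Lemma wt16_IS_of_F2_0 (x : 'F_2) : wt16 (IS_of_F2 0 x) = 8 * int_of_F2 x.
Proof. by F2_IS_cases. Qed.

Lemma wt16_IS_of_F2 (d c : 'F_2) : (8 %| wt16 (IS_of_F2 d c) - int_of_F2 d)%Z.
Proof. by F2_IS_cases. Qed.

Lemma wt16_fus (x d c : 'F_2) h : fus (IS_of_F2 0 x) (IS_of_F2 d c) h ->
  (16 %| wt16 h - wt16 (IS_of_F2 d c) + wt16 (IS_of_F2 0%R x) - 8 * int_of_F2 (x * d))%Z.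
Proof. by case: h; F2_IS_cases. Qed.

Section Labels.
Variables l r : nat.
Implicit Types (lam : Lam l r) (a b c d : 'rV['F_2]_(l + r)).

Lemma lam_of_dcE d c i : lam_of_dc d c i = IS_of_F2 (d 0 i) (c 0 i).
Proof. by rewrite ffunE. Qed.

Lemma lam_of_dc00 : lam_of_dc 0 0 = lam0 l r.
Proof. by apply/ffunP => i; rewrite !ffunE !mxE. Qed.

Lemma fusL_lam_of_dcE d1 c1 d2 c2 lam :
  fusL (lam_of_dc d1 c1) (lam_of_dc d2 c2) lam =
  [forall i, fus (IS_of_F2 (d1 0 i) (c1 0 i)) (IS_of_F2 (d2 0 i) (c2 0 i)) (lam i)].
Proof. by apply: eq_forallb => i; rewrite !lam_of_dcE. Qed.

Lemma fusL_lam_of_dc0 a b lam :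
  fusL (lam_of_dc 0 a) (lam_of_dc 0 b) lam -> lam = lam_of_dc 0 (a - b).
Proof.
rewrite fusL_lam_of_dcE => /forallP fus_lam; apply/ffunP => i.
by rewrite lam_of_dcE !mxE; apply: fus_IS_of_F2_0; move: (fus_lam i); rewrite mxE.
Qed.

Lemma fusL_lam_of_dc d1 c1 d2 c2 lam :
  fusL (lam_of_dc d1 c1) (lam_of_dc d2 c2) lam ->
  let c := \row_i half_bit (lam i) in lam = lam_of_dc (d1 - d2) c /\ dc_ok (d1 - d2) c.
Proof.
rewrite fusL_lam_of_dcE => /forallP fus_lam c.
have {}fus_lam i := fus_IS_of_F2 (fus_lam i).
split; last by apply/forallP => i; rewrite !mxE (fus_lam i).2.
by apply/ffunP => i; rewrite lam_of_dcE !mxE -(fus_lam i).1.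
Qed.

Definition sgn (i : 'I_(l + r)) : int := if Defs.is_left i then 1 else -1.

Definition wt16L lam : int := \sum_i sgn i * wt16 (lam i).

Lemma sLam_wt16L lam : 16 * sLam lam = (wt16L lam)%:~R.
Proof.
rewrite /sLam /wt16L big_mkcond [X in _ - X]big_mkcond -sumrB mulr_sumr rmorph_sum.
apply: eq_bigr => i _; rewrite /sgn; case: Defs.is_left;
  by rewrite ?subr0 ?sub0r ?mulrN ?mul1r ?mulN1r ?rmorphN ISval_wt16.
Qed.

Lemma wtE c : wt c = \sum_i sgn i * int_of_F2 (c 0 i).
Proof.
have card_sum P : (#|[set i | P i]|)%:Z = \sum_(i < l + r) (P i : nat)%:Z.
  rewrite -sum1_card (big_morph Posz PoszD (erefl _)) big_mkcond /=.
  by apply: eq_bigr => i _; rewrite inE; case: (P i).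
rewrite /wt /wtl /wtr !card_sum -sumrB; apply: eq_bigr => i _.
by rewrite /sgn /int_of_F2; case: (Defs.is_left i); case: (c 0 i == 1).
Qed.

Lemma dvdz_sgn_sum m (f : 'I_(l + r) -> int) :
  (forall i, (m %| f i)%Z) -> (m %| \sum_i sgn i * f i)%Z.
Proof. by move=> m_f; apply: rpred_sum => i _; apply: dvdz_mull. Qed.

Lemma wt16L_C a : wt16L (lam_of_dc 0 a) = 8 * wt a.
Proof.
rewrite wtE mulr_sumr; apply: eq_bigr => i _.
by rewrite lam_of_dcE mxE wt16_IS_of_F2_0 mulrCA.
Qed.

Lemma wt16L_D d c : (8 %| wt16L (lam_of_dc d c) - wt d)%Z.
Proof.
rewrite wtE -sumrB; under eq_bigr do rewrite -mulrBr.
by apply: dvdz_sgn_sum => i; rewrite lam_of_dcE wt16_IS_of_F2.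
Qed.

Lemma wt16L_fus a d c lam : fusL (lam_of_dc 0 a) (lam_of_dc d c) lam ->
  (16 %| wt16L lam - wt16L (lam_of_dc d c) + wt16L (lam_of_dc 0 a)
         - 8 * wt (cwmul a d))%Z.
Proof.
rewrite fusL_lam_of_dcE => /forallP fus_lam.
rewrite wtE mulr_sumr -!sumrB -big_split -sumrB /=.
under eq_bigr do rewrite mulrCA -!mulrBr -mulrDr -mulrBr.
apply: dvdz_sgn_sum => i; rewrite !lam_of_dcE !mxE.
by apply: wt16_fus; move: (fus_lam i); rewrite mxE.
Qed.

End Labels.

Section FramedAlgebra.
Variables (R : realType) (l r : nat) (V : vectType R[i]).
Variables (pi : Lam l r -> 'End(V)) (mul : V -> V -> V) (one : V).
Hypothesis framed : framed_algebra pi mul one.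

Local Notation S := (Sg pi).

Definition mulL (a : V) : V -> V := mul a.
Definition mulR (b : V) : V -> V := mul^~ b.

Lemma mulL_is_linear a : linear (mulL a).
Proof. by case: framed => -[_ [_ mul_linr] _ _] _ _ _ _ k x y; apply: mul_linr. Qed.

Lemma mulR_is_linear b : linear (mulR b).
Proof. by case: framed => -[_ [mul_linl _] _ _] _ _ _ _ k x y; apply: mul_linl. Qed.

HB.instance Definition _ a :=
  GRing.isLinear.Build R[i] V V *:%R (mulL a) (mulL_is_linear a).
HB.instance Definition _ b :=
  GRing.isLinear.Build R[i] V V *:%R (mulR b) (mulR_is_linear b).

Lemma mulv0 x : mul x 0 = 0.
Proof. exact: (linear0 (mulL x)). Qed.

Lemma mulv_sumr a I (s : seq I) (P : pred I) (F : I -> V) :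
  mul a (\sum_(i <- s | P i) F i) = \sum_(i <- s | P i) mul a (F i).
Proof. exact: (linear_sum (mulL a)). Qed.

Lemma mulv_suml b I (s : seq I) (P : pred I) (F : I -> V) :
  mul (\sum_(i <- s | P i) F i) b = \sum_(i <- s | P i) mul (F i) b.
Proof. exact: (linear_sum (mulR b)). Qed.

Lemma pi_idem lam v : pi lam (pi lam v) = pi lam v.
Proof. by case: framed => -[[idem _ _] _ _ _] _ _ _ _. Qed.

Lemma pi_orth lam mu v : lam != mu -> pi lam (pi mu v) = 0.
Proof. by case: framed => -[[_ orth _] _ _ _] _ _ _ _; apply: orth. Qed.

Lemma sum_pi v : \sum_(lam : Lam l r) pi lam v = v.
Proof. by case: framed => -[[_ _ sum_pi] _ _ _] _ _ _ _. Qed.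

Lemma pi_mem lam v : pi lam v \in S lam.
Proof. exact: memv_img (memvf v). Qed.

Lemma pi_id lam v : v \in S lam -> pi lam v = v.
Proof. by case/memv_imgP => w _ ->; rewrite pi_idem. Qed.

Lemma pi_eq0 lam mu v : v \in S mu -> lam != mu -> pi lam v = 0.
Proof. by move=> /pi_id <- /pi_orth ->. Qed.

Lemma Sg_neq0P lam : reflect (exists2 v, v \in S lam & v != 0) (S lam != 0%VS).
Proof.
apply: (iffP idP) => [nz_S | [v Sv]].
  by exists (vpick (S lam)); rewrite ?memv_pick ?vpick0.
by apply: contraNneq => S0; move: Sv; rewrite S0 memv0.
Qed.

Lemma one_neq0 : one != 0.
Proof. by case: framed => -[]. Qed.

Lemma one_mem : one \in S (lam0 l r).
Proof. by case: framed => -[]. Qed.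

Lemma mulv1 a : mul a one = a.
Proof. by case: framed => _ _ [_ _ mulv1]. Qed.

Lemma Sg0_neq0 : S (lam0 l r) != 0%VS.
Proof. by apply/Sg_neq0P; exists one; [apply: one_mem | apply: one_neq0]. Qed.

Lemma dvdz_wt16L lam : S lam != 0%VS -> (16 %| wt16L lam)%Z.
Proof.
case: framed => _ FA1 _ _ _ nz_S.
have /intrP [m sLam_m] : sLam lam \is a Num.int.
  by apply: contraNT nz_S => /FA1 ->.
have : (wt16L lam)%:~R = (16 * m)%:~R :> rat by rewrite -sLam_wt16L sLam_m rmorphM.
by move/intr_inj ->; apply: dvdz_mulr.
Qed.

Lemma pi_mul_nfus l1 l2 a1 a2 lam : a1 \in S l1 -> a2 \in S l2 ->
  ~~ fusL l1 l2 lam -> pi lam (mul a1 a2) = 0.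
Proof. by case: framed => _ _ _ FA3 _; apply: FA3. Qed.

Lemma pi_mul_braid l0 l1 l2 l3 lam' a1 a2 a3 :
  a1 \in S l1 -> a2 \in S l2 -> a3 \in S l3 -> inA l0 l2 l1 l3 lam' ->
  pi l0 (mul a2 (pi lam' (mul a1 a3))) =
  \sum_(lam : Lam l r | inA l0 l1 l2 l3 lam)
     BL R l0 l1 l2 l3 lam lam' *: pi l0 (mul a1 (pi lam (mul a2 a3))).
Proof. by case: framed => _ _ _ _ FA4; apply: FA4. Qed.

Definition annihilator (a : V) : {vspace V} :=
  (\bigcap_(mu : Lam l r) lker (linfun (mulL a) \o pi mu))%VS.

Lemma annihilatorP a m :
  reflect (forall mu, mul a (pi mu m) = 0) (m \in annihilator a).
Proof.
rewrite memvE; apply: (iffP subv_bigcapP) => [am0 mu | am0 mu _].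
  by move: (am0 mu isT); rewrite -memvE memv_ker comp_lfunE lfunE => /eqP.
by rewrite -memvE memv_ker comp_lfunE lfunE /= /mulL am0.
Qed.

(* (FA4) moves a past x, turning a (x m) into a combination of x (a m). *)
Lemma mul_pi_mul_eq0 la nu ka mu a x m :
  a \in S la -> x \in S nu -> m \in S ka ->
  mul a m = 0 -> mul a (pi mu (mul x m)) = 0.
Proof.
move=> Sa Sx Sm am0; rewrite -[LHS]sum_pi; apply: big1 => l0 _.
have [A_l0 | /nandP[nfus | nfus]] := boolP (inA l0 la nu ka mu).
- rewrite (pi_mul_braid Sx Sa Sm A_l0) am0; apply: big1 => lam _.
  by rewrite linear0 mulv0 linear0 scaler0.
- by rewrite (pi_mul_nfus Sx Sm nfus) mulv0 linear0.
- by rewrite (pi_mul_nfus Sa (pi_mem mu _) nfus).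
Qed.

Lemma annihilator_ideal la a : a \in S la -> is_ideal pi mul (annihilator a).
Proof.
move=> Sa; split=> [lam v /annihilatorP av0 | x m /annihilatorP am0].
  apply/annihilatorP => mu; have [-> | ne_mu] := eqVneq mu lam.
    by rewrite pi_idem av0.
  by rewrite pi_orth // mulv0.
apply/annihilatorP => mu.
rewrite -(sum_pi x) -(sum_pi m) mulv_suml linear_sum mulv_sumr big1 // => nu _.
rewrite mulv_sumr linear_sum mulv_sumr big1 // => ka _.
exact: mul_pi_mul_eq0 Sa (pi_mem _ _) (pi_mem _ _) (am0 ka).
Qed.

Lemma dvdz_wt_C_S a : a \in C_S pi -> (2 %| wt a)%Z.
Proof.
rewrite inE => /dvdz_wt16L; rewrite wt16L_C => wt_dvd.
by rewrite -(@dvdz_mul2l 8).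
Qed.

Lemma dvdz_wt_D_S d : d \in D_S pi -> (8 %| wt d)%Z.
Proof.
rewrite inE => /existsP[c /andP[_ /dvdz_wt16L wt16_dvd]].
have := rpredB (dvdz_trans (isT : (8 %| 16)%Z) wt16_dvd) (wt16L_D d c).
by rewrite opprB addrC subrK.
Qed.

Hypothesis simple : simple_framed pi mul.

Lemma mul_neq0 la lb a b : a \in S la -> b \in S lb -> a != 0 -> b != 0 ->
  mul a b != 0.
Proof.
move=> Sa Sb nz_a; apply: contraNneq => ab0.
have ann0 : annihilator a = 0%VS.
  have [// | annT] := simple (annihilator_ideal Sa).
  have /annihilatorP/(_ (lam0 l r)) : one \in annihilator a by rewrite annT memvf.
  by rewrite pi_id ?one_mem // mulv1 => a0; rewrite a0 eqxx in nz_a.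
suff : b \in annihilator a by rewrite ann0 memv0.
apply/annihilatorP => mu; have [-> | ne_mu] := eqVneq mu lb; first by rewrite pi_id.
by rewrite (pi_eq0 Sb ne_mu) mulv0.
Qed.

Lemma Sg_neq0_fusL la lb : S la != 0%VS -> S lb != 0%VS ->
  exists2 lam, fusL la lb lam & S lam != 0%VS.
Proof.
move=> /Sg_neq0P[a Sa nz_a] /Sg_neq0P[b Sb nz_b].
have /existsP[lam nz_pi] : [exists lam, pi lam (mul a b) != 0].
  apply: contraNT (mul_neq0 Sa Sb nz_a nz_b) => /existsPn pi0.
  by rewrite -[mul a b]sum_pi big1 // => lam _; apply/eqP/negPn/pi0.
exists lam; first by apply: contraNT nz_pi => nfus; rewrite (pi_mul_nfus Sa Sb nfus).
by apply/Sg_neq0P; exists (pi lam (mul a b)); rewrite ?pi_mem.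
Qed.

Lemma C_S_subgroup : is_subgroup (C_S pi).
Proof.
split=> [|x y]; first by rewrite inE lam_of_dc00 Sg0_neq0.
rewrite !inE => Sx Sy.
by have [lam /fusL_lam_of_dc0 <-] := Sg_neq0_fusL Sx Sy.
Qed.

Lemma D_S_subgroup : is_subgroup (D_S pi).
Proof.
split=> [|x y].
  rewrite inE; apply/existsP; exists 0; rewrite lam_of_dc00 Sg0_neq0 andbT.
  by apply/forallP => i; rewrite mxE mul0r.
rewrite !inE => /existsP[c1 /andP[_ Sx]] /existsP[c2 /andP[_ Sy]].
have [lam /fusL_lam_of_dc[lam_eq ok] S_lam] := Sg_neq0_fusL Sx Sy.
by apply/existsP; exists (\row_i half_bit (lam i)); rewrite ok -lam_eq.
Qed.

Lemma dvdz_wt_cwmul a d :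
  a \in C_S pi -> d \in D_S pi -> (2 %| wt (cwmul a d))%Z.
Proof.
rewrite !inE => Sa /existsP[c /andP[_ Sd]].
have [lam /wt16L_fus fus_dvd S_lam] := Sg_neq0_fusL Sa Sd.
have wt16_dvd := rpredD (rpredB (dvdz_wt16L S_lam) (dvdz_wt16L Sd)) (dvdz_wt16L Sa).
have := rpredB wt16_dvd fus_dvd.
by rewrite opprB addrC subrK => wt_dvd; rewrite -(@dvdz_mul2l 8).
Qed.

End FramedAlgebra.

Unset Implicit Arguments.

Theorem mainTheorem5 (R : realType) (l r : nat) (V : vectType R[i])
    (pi : Lam l r -> 'End(V)) (mul : V -> V -> V) (one : V) :
  framed_algebra pi mul one -> simple_framed pi mul ->
  [/\ is_subgroup (C_S pi) /\ is_subgroup (D_S pi),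
      (forall a, a \in C_S pi -> (2 %| wt a)%Z) /\
      (forall d, d \in D_S pi -> (8 %| wt d)%Z)
    & forall a d, a \in C_S pi -> d \in D_S pi -> (2 %| wt (cwmul a d))%Z].
Proof.
move=> framed simple; split.
- exact: conj (C_S_subgroup framed simple) (D_S_subgroup framed simple).
- exact: conj (dvdz_wt_C_S framed) (dvdz_wt_D_S framed).
- exact: dvdz_wt_cwmul framed simple.
Qed.
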